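(* Let $X$ be a compact metrizable countable space and $f:X\to X$ a continuous function such that $(X,f)$ is transitive. If either $f^p$ is continuous for every $p\in\mathbb N^*$, or $|\omega_f(x)|=1$ for every accumulation point $x$ of $X$, then the Ellis semigroup $E(X,f)$ is homeomorphic to $X$.
   Context: $(X,f)$ is transitive if some point has dense orbit $\{f^n(x):n\in\mathbb N\}$. $\mathbb N^*$ is the set of free ultrafilters on $\mathbb N$; for $p\in\beta\mathbb N$ the $p$-iterate is $f^p(x)=p\text{-}\lim_{n\to\infty}f^n(x)$, where $y=p\text{-}\lim x_n$ means $\{n: x_n\in V\}\in p$ for every neighborhood $V$ of $y$. The Ellis semigroup $E(X,f)$ is the closure of $\{f^n:n\in\mathbb N\}$ in $X^X$ with the product (pointwise) topology; it equals $\{f^p:p\in\beta\mathbb N\}$. The $\omega$-limit set $\omega_f(x)$ is the set of limits of sequences $f^{n_k}(x)$ with $(n_k)$ strictly increasing. An accumulation point is a non-isolated point. *)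

From HB Require Import structures.
From mathcomp Require Import all_boot all_order all_algebra.
From mathcomp Require Import all_classical all_reals all_analysis.
From mathcomp Require Import Rstruct Rstruct_topology.
From Stdlib Require Import Rdefinitions.
Set Implicit Arguments. Unset Strict Implicit. Unset Printing Implicit Defensive.
Import Order.TTheory GRing.Theory Num.Theory.
Local Open Scope classical_set_scope.
Local Open Scope ring_scope.

Definition metrizable (X : topologicalType) : Prop :=
  exists d : X -> X -> Rdefinitions.R,
    [/\ (forall x y, d x y = 0 <-> x = y),
        (forall x y, d x y = d y x),
        (forall x y z, d x z <= d x y + d y z) &
        (forall x : X, nbhs x =
           [set A : set X | exists2 e : Rdefinitions.R, 0 < e &
                            [set y | d x y < e] `<=` A])].

Definition transitive_sys (X : topologicalType) (f : X -> X) : Prop :=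
  exists x : X, closure (range (fun n : nat => iter n f x)) = [set: X].

Definition free_ultrafilter (p : set_system nat) : Prop :=
  UltraFilter p /\ (forall A : set nat, finite_set A -> ~ p A).

Definition p_iterate (X : ptopologicalType) (f : X -> X) (p : set_system nat)
  : X -> X :=
  fun x => lim ((fun n : nat => iter n f x) @ p).

Definition omega_limit (X : topologicalType) (f : X -> X) (x : X) : set X :=
  [set y | exists n : nat -> nat, (forall k : nat, leq (n k).+1 (n k.+1)) /\
           ((fun k : nat => iter (n k) f x) @ \oo --> y)].

Definition accumulation_point (X : topologicalType) (x : X) : Prop :=
  limit_point [set: X] x.

Definition ellis (X : topologicalType) (f : X -> X) : set {ptws X -> X} :=
  closure [set (iter n f : {ptws X -> X}) | n in [set: nat]].

Definition homeomorphic_to (Y Z : topologicalType) (E : set Y) : Prop :=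
  exists (g : Y -> Z) (h : Z -> Y),
    [/\ {within E, continuous g}, continuous h,
        (forall z, E (h z)),
        (forall y, E y -> h (g y) = y) &
        (forall z, g (h z) = z)].

From HB Require Import structures.
From mathcomp Require Import all_boot all_order all_algebra.
From mathcomp Require Import all_classical all_reals all_analysis.
From mathcomp Require Import Rstruct Rstruct_topology.
From mathcomp Require Import lra zify.
Set Implicit Arguments. Unset Strict Implicit. Unset Printing Implicit Defensive.
Import Order.TTheory GRing.Theory Num.Theory.
Local Open Scope classical_set_scope.
Local Open Scope ring_scope.

(* Evaluation at a point x0 with dense orbit, g |-> g x0, maps the Ellis
   semigroup E, a compact subspace of X^X, continuously onto the Hausdorff
   space X: its image is compact, hence closed, and contains the orbit of x0.
   So it is a homeomorphism as soon as it is injective.  Every g in E commutes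
   with f, so g x0 determines g on the orbit of x0.
   If all p-iterates are continuous then so is every g in E, since g is an
   iterate f^n or a p-iterate; density of the orbit concludes.
   Otherwise g is either some f^n or lies in the closure of every tail
   {f^n | n >= N}, and then g y lies in the omega-limit set of y.  If the orbit
   is not all of X it is not periodic, and the points off it are accumulation
   points, where all tail elements agree; an iterate and a tail element never
   agree at x0. *)

Lemma continuous_iter (X : topologicalType) (f : X -> X) n :
  continuous f -> continuous (iter n f).
Proof.
move=> fc; elim: n => [|n IH] x /=; first exact: cvg_id.
exact: continuous_comp (IH x) (fc _).
Qed.

Lemma image_closure_subset (Y Z : topologicalType) (g : Y -> Z) (S : set Y) :
  continuous g -> g @` closure S `<=` closure (g @` S).
Proof.
move=> gc _ [y cy <-] B /gc /cy [z [Sz Bz]].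
by exists (g z); split => //; exists z.
Qed.

Lemma closed_eqfun (Y Z : topologicalType) (u v : Y -> Z) :
  hausdorff_space Z -> continuous u -> continuous v -> closed [set t | u t = v t].
Proof.
move=> hZ uc vc t ct; apply: contrapT => /eqP uv.
move: hZ; rewrite open_hausdorff => /(_ _ _ uv) [[A B] /= [uA vB] [oA oB /eqP AB0]].
have nA : nbhs t (u @^-1` A).
  by apply: uc; apply: open_nbhs_nbhs; split => //; rewrite inE in uA.
have nB : nbhs t (v @^-1` B).
  by apply: vc; apply: open_nbhs_nbhs; split => //; rewrite inE in vB.
have [s [/= usvs [As Bs]]] := ct _ (filterI nA nB).
have : (A `&` B) (u s) by split => //; rewrite usvs.
by rewrite AB0.
Qed.

Lemma metrizable_hausdorff (X : topologicalType) : metrizable X -> hausdorff_space X.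
Proof.
case=> d [d0 dsym dtri dn] p q clpq; apply: contrapT => pq.
have dge0 x y : 0 <= d x y.
  by have := dtri x y x; rewrite (proj2 (d0 x x) erefl) (dsym y x); lra.
have dpq : 0 < d p q.
  by rewrite lt_neqAle dge0 andbT; apply/eqP => /esym /d0.
have [z [/= pz qz]] : [set y | d p y < d p q / 2] `&` [set y | d q y < d p q / 2] !=set0.
  by apply: clpq; rewrite dn; exists (d p q / 2) => //; lra.
by have := dtri p z q; rewrite (dsym z q); lra.
Qed.

Lemma not_accumulation_isolated (X : topologicalType) (x : X) :
  ~ accumulation_point x -> exists2 U, nbhs x U & U `<=` [set x].
Proof.
move=> nacc; apply: contrapT => nU; apply: nacc => U xU.
apply: contrapT => nex; apply: nU; exists U => // v Uv; apply: contrapT => vx.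
by apply: nex; exists v; split => //; exact/eqP.
Qed.

Lemma closure_setD_accumulation (X : topologicalType) (A : set X) (y : X) :
  closure A y -> ~ A y -> accumulation_point y.
Proof.
move=> cy nAy U /cy [z [Az Uz]]; exists z; split => //.
by apply/eqP => zy; apply: nAy; rewrite -zy.
Qed.

Lemma compact_homeomorphic_to (Y Z : topologicalType) (E : set Y) (e : Y -> Z) :
  hausdorff_space Z -> compact E -> continuous e ->
  (forall g h, E g -> E h -> e g = e h -> g = h) -> e @` E = [set: Z] ->
  homeomorphic_to Z E.
Proof.
move=> hZ cE ec inj onto.
have surj z : exists2 y, E y & e y = z.
  by have : (e @` E) z by rewrite onto.
pose h z := projT1 (cid2 (surj z)).
have hE z : E (h z) by rewrite /h; case: cid2.
have ehK z : e (h z) = z by rewrite /h; case: cid2.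
have heK y : E y -> h (e y) = y by move=> Ey; apply: inj; rewrite ?ehK.
exists e, h; split => //; first exact: continuous_subspaceT.
apply/continuous_closedP => C cC.
have -> : h @^-1` C = e @` (E `&` C).
  rewrite eqEsubset; split => [z Cz|_ [y [Ey Cy] <-]]; last by rewrite /= heK.
  by exists (h z); rewrite ?ehK.
apply: (compact_closed hZ); apply: (continuous_compact (continuous_subspaceT ec)).
exact: compact_closedI.
Qed.

Lemma ptws_hausdorff (T : eqType) (U : topologicalType) :
  hausdorff_space U -> hausdorff_space {ptws T -> U}.
Proof. by move=> hU; exact: (@hausdorff_product T (fun _ => U) (fun _ => hU)). Qed.

Lemma ptws_eval_continuous (T : eqType) (U : topologicalType) (t : T) :
  continuous (fun g : {ptws T -> U} => g t).
Proof. exact: (@proj_continuous T (fun _ => U) t). Qed.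

Lemma ptws_compact (T : eqType) (U : topologicalType) :
  compact [set: U] -> compact [set: {ptws T -> U}].
Proof.
move=> cU; have := @tychonoff T (fun _ => U) (fun _ => setT) (fun _ => cU).
by congr compact; apply/seteqP; split.
Qed.

Definition orbit_tail (T : Type) (f : T -> T) (x : T) (N : nat) : set T :=
  [set iter n f x | n in [set n | (N <= n)%N]].

Lemma orbit_tail_succ (T : Type) (f : T -> T) (x : T) N :
  orbit_tail f (f x) N `<=` orbit_tail f x N.
Proof. by move=> _ [n Nn <-]; exists n.+1; [exact: leqW | rewrite iterSr]. Qed.

Lemma periodic_orbit_finite (T : Type) (f : T -> T) (x : T) a b :
  (a < b)%N -> iter a f x = iter b f x -> finite_set (range (fun n => iter n f x)).
Proof.
move=> ab e.
have back n : exists2 m, (m < b)%N & iter n f x = iter m f x.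
  elim/ltn_ind: n => n IH; have [nb|bn] := ltnP n b; first by exists n.
  have -> : iter n f x = iter (n - b + a) f x by rewrite iterD e -iterD subnK.
  by apply: IH; lia.
apply: (@sub_finite_set _ _ [set iter n f x | n in `I_b]).
  by move=> _ [n _ <-]; have [m mb ->] := back n; exists m.
exact/finite_image/finite_II.
Qed.

Lemma dense_orbit_injective (X : topologicalType) (f : X -> X) (x0 y : X) :
  hausdorff_space X -> closure (range (fun n => iter n f x0)) = setT ->
  ~ range (fun n => iter n f x0) y -> injective (fun n => iter n f x0).
Proof.
move=> hX dense nOy.
suff aperiodic a b : (a < b)%N -> iter a f x0 <> iter b f x0.
  move=> a b e; apply: contrapT => /eqP; rewrite neq_ltn => /orP[ab|ba].
  - exact: aperiodic ab e.
  - exact: aperiodic ba (esym e).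
move=> ab /(periodic_orbit_finite ab).
move=> /(proj1 accessible_finite_set_closed (hausdorff_accessible hX)) closedO.
by apply: nOy; apply: closedO; rewrite dense.
Qed.

Section EllisSemigroup.
Variables (X : topologicalType) (f : X -> X).

Definition ellis_tail N : set {ptws X -> X} :=
  [set iter n f | n in [set n | (N <= n)%N]].

Lemma tail_eval_closure g y N :
  closure (ellis_tail N) g -> closure (orbit_tail f y N) (g y).
Proof.
move=> cg; have : closure ((fun t : {ptws X -> X} => t y) @` ellis_tail N) (g y).
  by apply: (image_closure_subset (@ptws_eval_continuous X X y)); exists g.
by apply: closureS => _ [_ [n Nn <-] <-]; exists n.
Qed.

Lemma ellis_compact : compact [set: X] -> compact (ellis f).
Proof.
move=> cX; apply: (subclosed_compact _ (@ptws_compact X X cX)) => //.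
exact: closed_closure.
Qed.

Hypothesis hX : hausdorff_space X.

Lemma ellis_iter_or_tail g : ellis f g ->
  (exists n, g = iter n f) \/ (forall N, closure (ellis_tail N) g).
Proof.
move=> Eg; have [|/existsNP [N nN]] := pselect (forall N, closure (ellis_tail N) g).
  by right.
left; have : closure ([set (iter n f : {ptws X -> X}) | n in `I_N] `|` ellis_tail N) g.
  apply: closureS Eg => _ [n _ <-].
  by have [n_lt_N|N_le_n] := ltnP n N; [left|right]; exists n.
rewrite closureU => -[cI|/nN []].
have fI : finite_set [set (iter n f : {ptws X -> X}) | n in `I_N].
  exact/finite_image/finite_II.
have closed_fin := proj1 accessible_finite_set_closed
  (hausdorff_accessible (@ptws_hausdorff X X hX)).
by have [n _ <-] := closed_fin _ fI g cI; exists n.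
Qed.

Lemma ellis_eval_onto x0 : compact [set: X] ->
  closure (range (fun n => iter n f x0)) = setT ->
  (fun g : {ptws X -> X} => g x0) @` ellis f = setT.
Proof.
move=> cX dense; apply/seteqP; split => // z _.
have closedI : closed ((fun g : {ptws X -> X} => g x0) @` ellis f).
  apply: (compact_closed hX); apply: continuous_compact (ellis_compact cX).
  exact/continuous_subspaceT/ptws_eval_continuous.
apply: closedI; have : closure (range (fun n => iter n f x0)) z by rewrite dense.
apply: closureS => _ [n _ <-]; exists (iter n f) => //.
by apply: subset_closure; exists n.
Qed.

Hypothesis fc : continuous f.

Lemma ellis_commute g : ellis f g -> forall y, g (f y) = f (g y).
Proof.
move=> Eg y.
have : closed [set t : {ptws X -> X} | t (f y) = f (t y)].
  apply: closed_eqfun => //; first exact: ptws_eval_continuous.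
  move=> t; apply: (@continuous_comp _ _ _ (fun t : {ptws X -> X} => t y) f).
    exact: ptws_eval_continuous.
  exact: fc.
by apply; apply: closureS Eg => _ [n _ <-] /=; rewrite -iterSr iterS.
Qed.

Lemma ellis_commute_iter g : ellis f g -> forall n y, g (iter n f y) = iter n f (g y).
Proof. by move=> Eg; elim=> [//|n IH] y /=; rewrite ellis_commute // IH. Qed.

End EllisSemigroup.

Lemma orbit_tail_closure_omega_limit (X : topologicalType) (f : X -> X) (y z : X) :
  metrizable X -> (forall N, closure (orbit_tail f y N) z) -> omega_limit f y z.
Proof.
case=> d [_ _ _ dn] cz.
have approx k N : {n | (N <= n)%N /\ d z (iter n f y) < k.+1%:R^-1}.
  apply: cid; have : nbhs z [set w | d z w < k.+1%:R^-1].
    by rewrite dn; exists k.+1%:R^-1.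
  by move=> /(cz N) [_ [[n /= Nn <-] dzn]]; exists n.
pose s := fix s k := if k is k'.+1 then sval (approx k (s k').+1) else sval (approx 0%N 0%N).
have s_close k : d z (iter (s k) f y) < k.+1%:R^-1.
  case: k => [|k] /=; first by case: (svalP (approx 0%N 0%N)).
  by case: (svalP (approx k.+1 (s k).+1)).
exists s; split; first by move=> k /=; case: (svalP (approx k.+1 (s k).+1)).
move=> V; rewrite dn => -[e e0 eV].
apply: filterS (near_infty_natSinv_lt (PosNum e0)) => k ke.
by apply: eV; exact: lt_trans (s_close k) ke.
Qed.

Section SingletonOmegaLimits.
Variables (X : topologicalType) (f : X -> X) (x0 : X).
Hypotheses (mX : metrizable X) (fc : continuous f).
Hypothesis omega1 : forall x, accumulation_point x -> exists y, omega_limit f x = [set y].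

Let hX := metrizable_hausdorff mX.

Lemma tail_eval_omega_limit g y :
  (forall N, closure (ellis_tail f N) g) -> omega_limit f y (g y).
Proof.
by move=> tg; apply: orbit_tail_closure_omega_limit mX _ => N; exact: tail_eval_closure.
Qed.

Lemma tails_agree_at_accumulation g h y : accumulation_point y ->
  (forall N, closure (ellis_tail f N) g) -> (forall N, closure (ellis_tail f N) h) ->
  g y = h y.
Proof.
move=> /omega1 [z oz] tg th.
have := tail_eval_omega_limit y tg; have := tail_eval_omega_limit y th.
by rewrite oz => /= -> ->.
Qed.

Lemma iter_eval_neq_tail_eval h m : injective (fun n => iter n f x0) ->
  ellis f h -> (forall N, closure (ellis_tail f N) h) -> iter m f x0 <> h x0.
Proof.
move=> inj Eh th e; pose w := iter m f x0.
(* At an accumulation point w, both h w and h (f w) = f (h w) are the unique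
   omega-limit point; at an isolated w = h x0, later iterates of x0 return
   to w.  Either way the orbit of x0 is periodic. *)
have hw : h w = iter (m + m) f x0 by rewrite ellis_commute_iter // -e iterD.
have [/omega1 [z oz]|/not_accumulation_isolated [U wU Uw]] :=
  pselect (accumulation_point w).
  have hwz : h w = z by have := tail_eval_omega_limit w th; rewrite oz.
  have hfwz : h (f w) = z.
    have : omega_limit f w (h (f w)).
      apply: orbit_tail_closure_omega_limit mX _ => N.
      apply: closureS (tail_eval_closure (y := f w) (th N)).
      exact: orbit_tail_succ.
    by rewrite oz.
  have periodic : iter (m + m).+1 f x0 = iter (m + m) f x0.
    by rewrite iterS -hw -ellis_commute // hfwz hwz.
  by have := inj _ _ periodic; lia.
have := tail_eval_closure (y := x0) (th m.+1); rewrite -e => /(_ U wU).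
by move=> [_ [[n /= mn <-] /Uw /inj nm]]; lia.
Qed.

Hypothesis dense : closure (range (fun n => iter n f x0)) = setT.

Lemma ellis_eval_injective_omega g h :
  ellis f g -> ellis f h -> g x0 = h x0 -> g = h.
Proof.
move=> Eg Eh e; apply: funext => y.
have [[n _ <-]|nOy] := pselect (range (fun n => iter n f x0) y).
  by rewrite !ellis_commute_iter // e.
have inj := dense_orbit_injective hX dense nOy.
have accy : accumulation_point y.
  by apply: closure_setD_accumulation nOy; rewrite dense.
have [[m gm]|tg] := ellis_iter_or_tail hX Eg;
  have [[k hk]|th] := ellis_iter_or_tail hX Eh.
- by move: e; rewrite gm hk => /inj ->.
- by exfalso; apply: (iter_eval_neq_tail_eval (m:=m) inj Eh th); rewrite -e gm.
- by exfalso; apply: (iter_eval_neq_tail_eval (m:=k) inj Eg tg); rewrite e hk.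
- exact: tails_agree_at_accumulation.
Qed.

End SingletonOmegaLimits.

Lemma finite_set_nat_bounded (A : set nat) : finite_set A -> exists M, A `<=` `I_M.
Proof.
move=> /finite_fsetP [B ->]; exists (\max_(i <- finmap.enum_fset B) i).+1 => n /= nB.
by rewrite ltnS; apply: (@leq_bigmax_seq _ _ xpredT id).
Qed.

Lemma ultrafilter_free_of_tails (p : set_system nat) : UltraFilter p ->
  (forall M, p [set n | (M <= n)%N]) -> free_ultrafilter p.
Proof.
move=> up tails; split => // A /finite_set_nat_bounded [M AM] pA.
have : p (A `&` [set n | (M <= n)%N]) by exact: filterI.
have -> : A `&` [set n | (M <= n)%N] = set0.
  by apply/seteqP; split => // n [/AM nM Mn]; rewrite /= leqNgt nM in Mn.
exact: filter_not_empty.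
Qed.

Lemma tail_p_iterate (X : ptopologicalType) (f : X -> X) (g : {ptws X -> X}) :
  hausdorff_space X -> (forall N, closure (ellis_tail f N) g) ->
  exists2 p, free_ultrafilter p & p_iterate f p = g.
Proof.
move=> hX tg.
(* The ultrafilter refines the filter generated by the sets
   {n >= M | f^n \in U} with U a neighbourhood of g. *)
pose B (i : set {ptws X -> X} * nat) := [set n | (i.2 <= n)%N /\ i.1 (iter n f)].
pose F := filter_from [set i | nbhs g i.1] B.
have FF : Filter F.
  apply: filter_from_filter; first by exists (setT, 0%N); exact: filterT.
  move=> [U M] [V N] /= gU gV; exists (U `&` V, maxn M N); first exact: filterI.
  by move=> n /= []; rewrite geq_max => /andP [Mn Nn] [Un Vn].
have PF : ProperFilter F.
  apply: filter_from_proper => -[U N] /= gU.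
  by have [_ [[n /= Nn <-] Un]] := tg N U gU; exists n.
have [p [up Fp]] := ultraFilterLemma PF.
exists p.
  apply: ultrafilter_free_of_tails => // M; apply: Fp.
  by exists (setT, M); [exact: filterT | move=> n []].
apply: funext => y; apply: (cvg_lim hX) => V yV; apply: Fp.
exists ([set t : {ptws X -> X} | V (t y)], 0%N); last by move=> n [].
exact: (@ptws_eval_continuous X X y g V yV).
Qed.

Section ContinuousIterates.
Variables (X : ptopologicalType) (f : X -> X).
Hypotheses (hX : hausdorff_space X) (fc : continuous f).
Hypothesis p_iterate_continuous :
  forall p, free_ultrafilter p -> continuous (p_iterate f p).

Lemma ellis_continuous g : ellis f g -> continuous (g : X -> X).
Proof.
move=> Eg; have [[n ->]|tg] := ellis_iter_or_tail hX Eg; first exact: continuous_iter.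
by have [p fp <-] := tail_p_iterate hX tg; exact: p_iterate_continuous.
Qed.

Lemma ellis_eval_injective_continuous x0 g h :
  closure (range (fun n => iter n f x0)) = setT ->
  ellis f g -> ellis f h -> g x0 = h x0 -> g = h.
Proof.
move=> dense Eg Eh e; apply: funext => y.
apply: (closed_eqfun hX (ellis_continuous Eg) (ellis_continuous Eh)).
have : closure (range (fun n => iter n f x0)) y by rewrite dense.
by apply: closureS => _ [n _ <-] /=; rewrite !ellis_commute_iter // e.
Qed.

End ContinuousIterates.

Theorem theorem4p2 (X : ptopologicalType) (f : X -> X) :
  compact [set: X] -> metrizable X -> countable [set: X] ->
  continuous f -> transitive_sys f ->
  ((forall p : set_system nat, free_ultrafilter p -> continuous (p_iterate f p))
   \/ (forall x : X, accumulation_point x ->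
         exists y : X, omega_limit f x = [set y])) ->
  homeomorphic_to X (ellis f).
Proof.
move=> cX mX _ fc [x0 dense] hyp.
have hX := metrizable_hausdorff mX.
apply: (@compact_homeomorphic_to _ _ _ (fun g : {ptws X -> X} => g x0) hX).
- exact: ellis_compact.
- exact: ptws_eval_continuous.
- move=> g h; case: hyp => hyp.
    exact: ellis_eval_injective_continuous.
  exact: ellis_eval_injective_omega.
- exact: ellis_eval_onto.
Qed.
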